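(* Let $G_1,\dots,G_r$ and $H_1,\dots,H_r$ be finite simple graphs, $S=\bigoplus_{d=1}^r\widehat{G_d}\otimes\mathcal{C}_d$ and $T=\bigoplus_{d=1}^r\widehat{H_d}\otimes\mathcal{C}_d$. The following are equivalent: (1) $T\le S$; (2) there exist a function $\varphi:\bigsqcup_{d=1}^rV(H_d)\to\bigsqcup_{d=1}^rV(G_d)$ and isometries $U_h:\mathbb{C}^{\pi(h)}\to\mathbb{C}^{\pi(\varphi(h))}$ for $h\in\bigsqcup_{d}V(H_d)$ such that for all $h,h'$: if $h\not\simeq h'$ then ($\varphi(h)\not\simeq\varphi(h')$ or $U_h^*U_{h'}=0$); and if $h\simeq h'$ and $\varphi(h)\simeq\varphi(h')$ then $U_h^*U_{h'}=cI_{\pi(h)}$ for some $c\in\mathbb{C}$.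
   Context: A noncommutative graph is a subspace $S\subseteq B(\mathcal{H})$ ($\mathcal{H}$ finite-dimensional complex Hilbert space) with $I\in S$, $S^*=S$. A cohomomorphism from $T\subseteq B(\mathcal{K})$ to $S\subseteq B(\mathcal{H})$ is a finite family of linear maps $E_i:\mathcal{K}\to\mathcal{H}$ with $\sum_iE_i^*E_i=I$ and $E_i^*SE_j\subseteq T$ for all $i,j$; write $T\le S$ if one exists. Tensor product and direct sum of noncommutative graphs are $\operatorname{span}\{A\otimes B\}$ and $\{A\oplus B\}$. For a finite simple graph $G$, $\widehat{G}=\operatorname{span}\{|x\rangle\langle x'|:x,x'\in V(G),\ x=x'\text{ or }x\sim x'\}\subseteq B(\mathbb{C}^{V(G)})$; $\mathcal{C}_d=\mathbb{C}I\subseteq B(\mathbb{C}^d)$. For a direct sum $\bigoplus_{d=1}^r\widehat{G_d}\otimes\mathcal{C}_d$, $\pi:\bigsqcup_dV(G_d)\to\{1,\dots,r\}$ sends $g\in V(G_d)$ to $d$, and for $g\in V(G_d)$, $g'\in V(G_{d'})$ we write $g\simeq g'$ iff $d=d'$ and $g,g'$ are equal or adjacent in $G_d$ (similarly for the $H_d$). *)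

From HB Require Import structures.
From mathcomp Require Import all_boot all_order all_algebra.
From mathcomp Require Import complex mxtens.
From mathcomp Require Import reals.
Set Implicit Arguments. Unset Strict Implicit. Unset Printing Implicit Defensive.
Import Order.TTheory GRing.Theory Num.Theory.
Local Open Scope ring_scope.

Section NCGraphs.
Variable C : numClosedFieldType.

Definition adjm (m n : nat) (A : 'M[C]_(m, n)) : 'M[C]_(n, m) := (map_mx Num.conj A)^T.

(* U^* V for U : C^n -> C^a and V : C^m -> C^b.  It is only meaningful when
   a = b; conform_mx replaces V by the zero matrix if a <> b (in the theorem
   this product is only inspected when a = b). *)
Definition adjprod (a b n m : nat) (U : 'M[C]_(a, n)) (V : 'M[C]_(b, m)) : 'M[C]_(n, m) :=
  adjm U *m conform_mx (0 : 'M[C]_(a, m)) V.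

Definition inspan (m n : nat) (P : 'M[C]_(m, n) -> Prop) (X : 'M[C]_(m, n)) : Prop :=
  exists (k : nat) (c : 'I_k -> C) (A : 'I_k -> 'M[C]_(m, n)),
    (forall i, P (A i)) /\ X = \sum_(i < k) c i *: A i.

(* A subspace of B(C^n), given by its membership predicate. *)
Definition ncg (n : nat) := 'M[C]_n -> Prop.

Definition ghat (n : nat) (e : rel 'I_n) : ncg n :=
  inspan (fun X => exists x x' : 'I_n, ((x == x') || e x x') /\ X = delta_mx x x').

Definition scal_ncg (d : nat) : ncg d := fun X => exists c : C, X = c%:M.

Definition tens_ncg (m n : nat) (S : ncg m) (T : ncg n) : ncg (m * n) :=
  inspan (fun X => exists (A : 'M[C]_m) (B : 'M[C]_n), S A /\ T B /\ X = A *t B).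

Definition dsum_ncg (r : nat) (p : 'I_r -> nat) (S : forall i, ncg (p i))
  : ncg (\sum_(i < r) p i) :=
  fun X => exists B : forall i, 'M[C]_(p i), (forall i, S i (B i)) /\ X = mxdiag B.

Definition cohom (k n m : nat) (T : ncg k) (S : ncg n) (E : 'I_m -> 'M[C]_(n, k)) : Prop :=
  \sum_(i < m) adjm (E i) *m E i = 1%:M /\
  forall i j (X : 'M[C]_n), S X -> T (adjm (E i) *m X *m E j).

Definition nc_le (k n : nat) (T : ncg k) (S : ncg n) : Prop :=
  exists (m : nat) (E : 'I_m -> 'M[C]_(n, k)), cohom T S E.

(* (+)_{d=1}^r  G_d-hat (x) C_d ; the index d : 'I_r stands for d+1. *)
Definition blockgraph (r : nat) (nG : 'I_r -> nat) (eG : forall d, rel 'I_(nG d))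
  : ncg (\sum_(d < r) nG d * d.+1) :=
  dsum_ncg (fun d : 'I_r => tens_ncg (ghat (eG d)) (@scal_ncg d.+1)).

End NCGraphs.

(* Disjoint union of the vertex sets; the tag d : 'I_r stands for graph d+1,
   so pi(h) = (tag h).+1. *)
Definition vtx (r : nat) (nG : 'I_r -> nat) := {d : 'I_r & 'I_(nG d)}.

Definition pidim (r : nat) (nG : 'I_r -> nat) (h : vtx nG) : nat := (tag h).+1.

Definition simg (r : nat) (nG : 'I_r -> nat) (eG : forall d, rel 'I_(nG d))
  (h h' : vtx nG) : bool :=
  (tag h == tag h') &&
  ((tagged h == tagged_as h h') || eG (tag h) (tagged h) (tagged_as h h')).

From HB Require Import structures.
From mathcomp Require Import all_boot all_order all_algebra.
From mathcomp Require Import complex mxtens.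
From mathcomp Require Import reals.
Set Implicit Arguments. Unset Strict Implicit. Unset Printing Implicit Defensive.
Import Order.TTheory GRing.Theory Num.Theory.
Local Open Scope ring_scope.

(* Index the standard basis of (+)_d C^{V(G_d)} (x) C^{d+1} by pairs (g, k), g a
   vertex and k < pi(g).  A matrix lies in S exactly when each of its (g, g')
   blocks is c(g, g') I, with c vanishing unless g ~= g'.

   (2) => (1): the operators E_h = |phi h><h| (x) U_h form a cohomomorphism.
   Their Gram matrices add up to I because the U_h are isometries, and E_h^* X E_h'
   is the single block |h><h'| (x) c(phi h, phi h') U_h^* U_h', which the two
   conditions on the U_h place in T.

   (1) => (2): as sum_i E_i^* E_i = I, every h has a nonzero block
   A_h = E_i[phi h, h] for some i and some vertex phi h.  When phi h ~= phi h',
   sandwiching the element |phi h><phi h'| (x) I of S gives A_h^* A_h' = mu I,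
   with mu = 0 unless h ~= h'.  For h = h' this is lam_h I with lam_h > 0, and
   U_h = lam_h^{-1/2} A_h works. *)

Section VertexIndex.
Variables (r : nat) (n : 'I_r -> nat).

Definition block_size (d : 'I_r) := (n d * d.+1)%N.
Definition total_size := (\sum_(d < r) n d * d.+1)%N.

(* The coordinate e_x (x) e_k of the summand C^{V(G_d)} (x) C^{d+1}, for g = (d, x). *)
Definition vindex (g : vtx n) (k : 'I_(pidim g)) : 'I_total_size :=
  @tagnat.Rank r block_size (tag g) (mxtens_index (tagged g, k)).

Definition vertex_of (a : 'I_total_size) : vtx n :=
  Tagged (fun d => 'I_(n d)) (mxtens_unindex (@tagnat.sig2 r block_size a)).1.

Definition copy_of (a : 'I_total_size) : 'I_(pidim (vertex_of a)) :=
  (mxtens_unindex (@tagnat.sig2 r block_size a)).2.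

Lemma vindex_copy_of a : vindex (copy_of a) = a.
Proof.
rewrite /vindex /copy_of /vertex_of.
have := mxtens_unindexK (@tagnat.sig2 r block_size a).
by case: (mxtens_unindex _) => x k /= ->; rewrite tagnat.sig2K.
Qed.

Lemma vindex_inj g g' (k : 'I_(pidim g)) (k' : 'I_(pidim g')) :
  vindex k = vindex k' -> g = g' /\ val k = val k'.
Proof.
move=> e; have /eqP := congr1 val e.
rewrite /vindex tagnat.eq_Rank => /andP[/eqP et /eqP ev].
case: g k e et ev => d x k; case: g' k' => d' x' k' /= _ et; subst d' => ev.
have /(congr1 (@mxtens_unindex _ _)) : mxtens_index (x, k) = mxtens_index (x', k').
  exact: val_inj.
by rewrite !mxtens_indexK => -[-> ->].
Qed.

Lemma vertex_of_vindex g (k : 'I_(pidim g)) : vertex_of (vindex k) = g.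
Proof. by have [] := vindex_inj (vindex_copy_of (vindex k)). Qed.

Lemma copy_of_vindex g (k : 'I_(pidim g)) : val (copy_of (vindex k)) = val k.
Proof. by have [] := vindex_inj (vindex_copy_of (vindex k)). Qed.

Lemma eq_vindex g g' (k : 'I_(pidim g)) (k' : 'I_(pidim g')) :
  (vindex k == vindex k') = (g == g') && (val k == val k').
Proof.
apply/eqP/andP => [/vindex_inj[eg ->]|[/eqP eg /eqP ek]]; first by subst g'; rewrite !eqxx.
by subst g'; congr vindex; exact: val_inj.
Qed.

Lemma big_vindex (V : nmodType) (F : 'I_total_size -> V) :
  \sum_a F a = \sum_(g : vtx n) \sum_(k : 'I_(pidim g)) F (vindex k).
Proof.
rewrite [RHS](@sig_big_dep _ 0 +%R _ (fun g : vtx n => ('I_(pidim g) : finType)) xpredT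
  (fun _ => xpredT) (fun g k => F (vindex k))) /=.
rewrite (reindex (fun p : {g : vtx n & 'I_(pidim g)} => vindex (tagged p))) //=.
exists (fun a => Tagged (fun g => 'I_(pidim g)) (copy_of a)) => [[g k] _|a _] /=.
  move: (copy_of (vindex k)) (copy_of_vindex k); rewrite vertex_of_vindex => k' ek.
  by congr Tagged; exact: val_inj.
exact: vindex_copy_of.
Qed.

End VertexIndex.

Section MxdiagEntries.
Variables (V : nmodType) (r : nat) (p_ : 'I_r -> nat) (B : forall d, 'M[V]_(p_ d)).

Lemma mxdiagE_Rank d (a b : 'I_(p_ d)) :
  mxdiag B (tagnat.Rank d a) (tagnat.Rank d b) = B d a b.
Proof.
rewrite /mxdiag /mxblock mxE /tagnat.sig1 /tagnat.sig2 /tagnat.Rank !tagnat.rankK /=.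
by rewrite eqxx conform_mx_id.
Qed.

Lemma mxdiagE_Rank_neq d d' (a : 'I_(p_ d)) (b : 'I_(p_ d')) :
  d != d' -> mxdiag B (tagnat.Rank d a) (tagnat.Rank d' b) = 0.
Proof.
move=> /negbTE ne.
by rewrite /mxdiag /mxblock mxE /tagnat.sig1 /tagnat.sig2 /tagnat.Rank !tagnat.rankK /= ne mxE.
Qed.

End MxdiagEntries.

Section Span.
Variables (C : numClosedFieldType) (m n : nat) (P : 'M[C]_(m, n) -> Prop).

Lemma inspan_ind (Q : 'M[C]_(m, n) -> Prop) :
  Q 0 -> (forall a b, Q a -> Q b -> Q (a + b)) ->
  (forall c A, P A -> Q (c *: A)) -> forall X, inspan P X -> Q X.
Proof.
move=> Q0 QD QZ X [k [c [A [HA ->]]]].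
by apply: (big_ind Q) => // i _; apply: QZ.
Qed.

Lemma inspan0 : inspan P 0.
Proof. by exists 0%N, (fun _ => 0), (fun _ => 0); split; [case | rewrite big_ord0]. Qed.

Lemma inspan_gen A : P A -> inspan P A.
Proof.
by move=> PA; exists 1%N, (fun _ => 1), (fun _ => A); rewrite big_ord1 scale1r.
Qed.

Lemma inspanZ a X : inspan P X -> inspan P (a *: X).
Proof.
move=> [k [c [A [HA ->]]]]; exists k, (fun i => a * c i), A; split=> //.
by rewrite scaler_sumr; apply: eq_bigr => i _; rewrite scalerA.
Qed.

Lemma inspanD X Y : inspan P X -> inspan P Y -> inspan P (X + Y).
Proof.
move=> [k1 [c1 [A1 [H1 ->]]]] [k2 [c2 [A2 [H2 ->]]]].
exists (k1 + k2)%N, (fun i => match split i with inl a => c1 a | inr b => c2 b end),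
  (fun i => match split i with inl a => A1 a | inr b => A2 b end); split.
  by move=> i; case: split.
rewrite big_split_ord /=; congr (_ + _); apply: eq_bigr => i _.
  by rewrite (unsplitK (inl i)).
by rewrite (unsplitK (inr i)).
Qed.

Lemma inspan_sum (I : finType) (F : I -> 'M[C]_(m, n)) :
  (forall i, inspan P (F i)) -> inspan P (\sum_i F i).
Proof. by move=> PF; apply: big_ind => //; [exact: inspan0 | exact: inspanD]. Qed.

End Span.

Section GhatTensScal.
Variables (C : numClosedFieldType) (m p : nat) (e : rel 'I_m).

Lemma ghat_entry0 (Y : 'M[C]_m) x x' :
  ghat e Y -> ~~ ((x == x') || e x x') -> Y x x' = 0.
Proof.
move=> gY nxx'; move: Y gY; apply: inspan_ind => [|a b Ha Hb|c A [y [y' [yy' ->]]]].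
- by rewrite mxE.
- by rewrite mxE Ha Hb addr0.
- rewrite !mxE; case: (x =P y) => [ex|]; last by rewrite mulr0.
  by case: (x' =P y') => [ex'|]; [subst; rewrite yy' in nxx' | rewrite mulr0].
Qed.

Lemma tens_ghat_scalP (W : 'M[C]_(m * p)) :
  tens_ncg (ghat e) (@scal_ncg C p) W <->
  exists cd : 'I_m -> 'I_m -> C,
    (forall x x', ~~ ((x == x') || e x x') -> cd x x' = 0) /\
    forall x x' (k k' : 'I_p),
      W (mxtens_index (x, k)) (mxtens_index (x', k')) = cd x x' *+ (val k == val k').
Proof.
split.
  move: W; apply: inspan_ind.
  - by exists (fun _ _ => 0); split=> // *; rewrite mxE mul0rn.
  - move=> a b [ca [ca0 caE]] [cb [cb0 cbE]].
    exists (fun x x' => ca x x' + cb x x'); split=> [x x' nxx'|x x' k k'].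
      by rewrite ca0 // cb0 // addr0.
    by rewrite mxE caE cbE mulrnDl.
  - move=> c A [Y [Z [gY [[z ->] ->]]]].
    exists (fun x x' => c * (Y x x' * z)); split=> [x x' nxx'|x x' k k'].
      by rewrite (ghat_entry0 gY nxx') mul0r mulr0.
    by rewrite mxE tensmxE mxE -!mulrnAr.
move=> [cd [cd0 cdE]].
have -> : W = \sum_x \sum_x' cd x x' *: (delta_mx x x' *t (1%:M : 'M[C]_p)).
  apply/matrixP => a b.
  case: (mxtens_indexP a) => x1 k1; case: (mxtens_indexP b) => x2 k2.
  rewrite cdE summxE (big_only1 x1) // => [|x nx _]; last first.
    rewrite summxE big1 // => x' _.
    by rewrite mxE tensmxE !mxE eq_sym (negbTE nx) mul0r mulr0.
  rewrite summxE (big_only1 x2) // => [|x' nx _]; last first.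
    by rewrite mxE tensmxE !mxE eq_sym (negbTE nx) andbF mul0r mulr0.
  by rewrite mxE tensmxE !mxE !eqxx mul1r mulr_natr.
apply: inspan_sum => x; apply: inspan_sum => x'.
have [xx'|nxx'] := boolP ((x == x') || e x x'); last first.
  by rewrite cd0 // scale0r; exact: inspan0.
apply/inspanZ/inspan_gen; exists (delta_mx x x'), 1%:M; split.
  by apply: inspan_gen; exists x, x'.
by split=> //; exists 1.
Qed.

End GhatTensScal.

Section BlockGraph.
Variables (C : numClosedFieldType) (r : nat) (n : 'I_r -> nat).
Variable e : forall d, rel 'I_(n d).

Definition simg_supported (c : vtx n -> vtx n -> C) :=
  forall g g', ~~ simg e g g' -> c g g' = 0.

Definition blockwise_scalar (c : vtx n -> vtx n -> C) (X : 'M[C]_(total_size n)) :=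
  forall g g' (k : 'I_(pidim g)) (k' : 'I_(pidim g')),
    X (vindex k) (vindex k') = c g g' *+ (val k == val k').

Lemma blockgraphP X :
  blockgraph e X <-> exists c, simg_supported c /\ blockwise_scalar c X.
Proof.
split=> [[B [BG ->]]|[c [c0 cE]]].
  have /fin_all_exists [cd cdP] := fun d => iffLR (tens_ghat_scalP _ _) (BG d).
  exists (fun g g' => if tag g == tag g' then cd (tag g) (tagged g) (tagged_as g g') else 0).
  split=> [g g'|[d x] [d' x'] k k'].
    by rewrite /simg; case: eqP => //= _; case: (cdP (tag g)) => cd0 _; apply: cd0.
  rewrite /vindex /=; case: (d =P d') => [ed|/eqP ne]; last first.
    by rewrite mxdiagE_Rank_neq // mul0rn.
  by subst d'; rewrite mxdiagE_Rank tagged_asE; case: (cdP d) => _ ->.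
pose B d : 'M[C]_(n d * d.+1) := \matrix_(a, b)
  (c (Tagged (fun d => 'I_(n d)) (mxtens_unindex a).1)
     (Tagged (fun d => 'I_(n d)) (mxtens_unindex b).1)
   *+ (val (mxtens_unindex a).2 == val (mxtens_unindex b).2)).
exists B; split=> [d|].
  apply/tens_ghat_scalP.
  exists (fun x x' => c (Tagged (fun d => 'I_(n d)) x) (Tagged (fun d => 'I_(n d)) x')).
  split=> [x x' nxx'|x x' k k']; last by rewrite mxE !mxtens_indexK.
  by apply: c0; rewrite /simg /= eqxx /= tagged_asE.
apply/matrixP => a b; rewrite -(vindex_copy_of a) -(vindex_copy_of b) cE.
move: (vertex_of a) (vertex_of b) (copy_of a) (copy_of b) => [d x] [d' x'] /= k k'.
rewrite /vindex /=; case: (d =P d') => [ed|/eqP ne].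
  by subst d'; rewrite mxdiagE_Rank mxE !mxtens_indexK.
by rewrite mxdiagE_Rank_neq // c0 ?mul0rn // /simg /= (negbTE ne).
Qed.

End BlockGraph.

Section Adjoint.
Variable C : numClosedFieldType.

Lemma adjmE (m n : nat) (A : 'M[C]_(m, n)) i j : adjm A i j = (A j i)^*.
Proof. by rewrite !mxE. Qed.

Lemma adjprodE (a b n m : nat) (eab : a = b) (U : 'M[C]_(a, n)) (V : 'M[C]_(b, m)) i j :
  adjprod U V i j = \sum_(l < a) (U l i)^* * V (cast_ord eab l) j.
Proof.
case: b / eab in V *; rewrite /adjprod conform_mx_id mxE.
by apply: eq_bigr => l _; rewrite adjmE cast_ord_id.
Qed.

Lemma adjprod_id (a n : nat) (U : 'M[C]_(a, n)) : adjprod U U = adjm U *m U.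
Proof. by rewrite /adjprod conform_mx_id. Qed.

Lemma adjprodZ (a b n m : nat) (eab : a = b) x y (U : 'M[C]_(a, n)) (V : 'M[C]_(b, m)) i j :
  adjprod (x *: U) (y *: V) i j = x^* * y * adjprod U V i j.
Proof.
rewrite !(adjprodE eab) mulr_sumr; apply: eq_bigr => l _.
by rewrite !mxE rmorphM /= mulrACA.
Qed.

Lemma sum_delta_cast (a b : nat) (eab : a = b) (F : 'I_a -> 'I_b -> C) :
  \sum_(l < a) \sum_(l' < b) F l l' *+ (val l == val l') =
  \sum_(l < a) F l (cast_ord eab l).
Proof.
case: b / eab in F *; apply: eq_bigr => l _; rewrite cast_ord_id.
rewrite (bigD1 l) //= eqxx mulr1n big1 ?addr0 // => l' nl.
by rewrite val_eqE eq_sym (negbTE nl) mulr0n.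
Qed.

Lemma invsqrtC_normalize (lam : C) : 0 < lam ->
  ((sqrtC lam)^-1)^* * (sqrtC lam)^-1 * lam = 1.
Proof.
move=> lam_gt0; have s_gt0 : 0 < sqrtC lam by rewrite sqrtC_gt0.
rewrite geC0_conj ?invr_ge0 ?ltW // -{3}(sqrtCK lam) expr2 mulrACA.
by rewrite mulVf ?mul1r // gt_eqF.
Qed.

End Adjoint.

Section Simg.
Variables (r : nat) (n : 'I_r -> nat) (e : forall d, rel 'I_(n d)).

Lemma simg_refl g : simg e g g.
Proof. by case: g => d x; rewrite /simg /= eqxx tagged_asE eqxx. Qed.

Lemma simg_pidim g g' : simg e g g' -> pidim g = pidim g'.
Proof. by case/andP => /eqP eg _; rewrite /pidim eg. Qed.

End Simg.

Section Sandwich.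
Variables (C : numClosedFieldType) (r : nat) (nG nH : 'I_r -> nat).
Notation NG := (total_size nG).
Notation NH := (total_size nH).

(* The Kronecker delta on values pairs the copies of [g] and [g'], whose index
   types differ, without a cast. *)
Definition copy_inner (E E' : 'M[C]_(NG, NH)) (g g' : vtx nG) a b :=
  \sum_(l : 'I_(pidim g)) \sum_(l' : 'I_(pidim g'))
     (E (vindex l) a)^* * E' (vindex l') b *+ (val l == val l').

Lemma copy_inner_cast (E E' : 'M[C]_(NG, NH)) g g' (eg : pidim g = pidim g') a b :
  copy_inner E E' g g' a b =
  \sum_(l : 'I_(pidim g)) (E (vindex l) a)^* * E' (vindex (cast_ord eg l)) b.
Proof. exact: (sum_delta_cast eg (fun l l' => (E (vindex l) a)^* * E' (vindex l') b)). Qed.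

Lemma sandwich_blockwise (E E' : 'M[C]_(NG, NH)) c (X : 'M[C]_NG) a b :
  blockwise_scalar c X ->
  (adjm E *m X *m E') a b = \sum_g \sum_g' c g g' * copy_inner E E' g g' a b.
Proof.
move=> cX; rewrite mxE big_vindex.
under eq_bigr do under eq_bigr do rewrite mxE big_vindex big_distrl /=.
under eq_bigr do under eq_bigr do under eq_bigr do rewrite big_distrl /=.
under eq_bigr do rewrite exchange_big /=.
under eq_bigr do under eq_bigr do rewrite exchange_big /=.
rewrite exchange_big /=; apply: eq_bigr => g _; apply: eq_bigr => g' _.
rewrite /copy_inner big_distrr /=; apply: eq_bigr => l _.
rewrite big_distrr /=; apply: eq_bigr => l' _.
rewrite adjmE cX; case: (_ == _); rewrite ?mulr0n ?mulr1n ?mulr0 ?mul0r //.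
by rewrite mulrCA mulrA.
Qed.

End Sandwich.

Section IsometricCohom.
Variables (C : numClosedFieldType) (r : nat) (nG nH : 'I_r -> nat).
Variables (eG : forall d, rel 'I_(nG d)) (eH : forall d, rel 'I_(nH d)).

Definition isometric_cohom (phi : vtx nH -> vtx nG)
    (U : forall h : vtx nH, 'M[C]_(pidim (phi h), pidim h)) : Prop :=
  (forall h, adjm (U h) *m U h = 1%:M) /\
  (forall h h', ~~ simg eH h h' ->
     ~~ simg eG (phi h) (phi h') \/ adjprod (U h) (U h') = 0) /\
  (forall h h', simg eH h h' -> simg eG (phi h) (phi h') ->
     exists c : C, forall (i : 'I_(pidim h)) (j : 'I_(pidim h')),
       adjprod (U h) (U h') i j = c *+ (nat_of_ord i == nat_of_ord j)).

End IsometricCohom.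

Arguments isometric_cohom {C r nG nH} eG eH phi U.

Section KrausOfIsometries.
Variables (C : numClosedFieldType) (r : nat) (nG nH : 'I_r -> nat).
Variables (eG : forall d, rel 'I_(nG d)) (eH : forall d, rel 'I_(nH d)).
Variables (phi : vtx nH -> vtx nG) (U : forall h : vtx nH, 'M[C]_(pidim (phi h), pidim h)).
Hypothesis U_iso : forall h, adjm (U h) *m U h = 1%:M.
Hypothesis U_orth : forall h h', ~~ simg eH h h' ->
  ~~ simg eG (phi h) (phi h') \/ adjprod (U h) (U h') = 0.
Hypothesis U_scal : forall h h', simg eH h h' -> simg eG (phi h) (phi h') ->
  exists c : C, forall (i : 'I_(pidim h)) (j : 'I_(pidim h')),
    adjprod (U h) (U h') i j = c *+ (nat_of_ord i == nat_of_ord j).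

(* The operator |phi h><h| (x) U_h; [inord] retypes the copy indices, whose
   types depend on the vertices. *)
Definition kraus (h : vtx nH) : 'M[C]_(total_size nG, total_size nH) :=
  \matrix_(a, b) if (vertex_of a == phi h) && (vertex_of b == h)
                 then U h (inord (copy_of a)) (inord (copy_of b)) else 0.

Lemma krausE h g h1 (l : 'I_(pidim g)) (k : 'I_(pidim h1)) :
  kraus h (vindex l) (vindex k) =
  if (g == phi h) && (h1 == h) then U h (inord l) (inord k) else 0.
Proof. by rewrite mxE !copy_of_vindex !vertex_of_vindex. Qed.

Lemma kraus_vindex h (l : 'I_(pidim (phi h))) (k : 'I_(pidim h)) :
  kraus h (vindex l) (vindex k) = U h l k.
Proof. by rewrite krausE !eqxx !inord_val. Qed.

Lemma kraus_gramE h h1 h2 (k1 : 'I_(pidim h1)) (k2 : 'I_(pidim h2)) :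
  (adjm (kraus h) *m kraus h) (vindex k1) (vindex k2) =
  ((h1 == h) && (vindex k1 == vindex k2))%:R.
Proof.
rewrite mxE big_vindex (big_only1 (phi h)) // => [|g ng _]; last first.
  by apply: big1 => l _; rewrite adjmE !krausE (negbTE ng) conjC0 mul0r.
rewrite eq_vindex; case: (h1 =P h) => [e1|/eqP ne1] /=; last first.
  by apply: big1 => l _; rewrite adjmE !krausE (negbTE ne1) andbF conjC0 mul0r.
subst h1; case: (h2 =P h) => [e2|/eqP ne2]; last first.
  have /negbTE -> : h != h2 by rewrite eq_sym.
  by apply: big1 => l _; rewrite !krausE (negbTE ne2) andbF mulr0.
subst h2; rewrite eqxx /=.
have := congr1 (fun M : 'M[C]_(pidim h) => M (inord k1) (inord k2)) (U_iso h).
rewrite /= !mxE !inord_val => <-.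
by apply: eq_bigr => l _; rewrite !adjmE !krausE !eqxx !inord_val.
Qed.

Lemma kraus_complete :
  \sum_(i < #|{: vtx nH}|) adjm (kraus (enum_val i)) *m kraus (enum_val i) = 1%:M.
Proof.
rewrite -(big_enum_val (A := {: vtx nH}) (fun h => adjm (kraus h) *m kraus h)) /=.
apply/matrixP => a b; rewrite -(vindex_copy_of a) -(vindex_copy_of b).
move: (vertex_of a) (copy_of a) (vertex_of b) (copy_of b) => h1 k1 h2 k2.
rewrite summxE (big_only1 h1) // => [|h nh _]; last first.
  by rewrite kraus_gramE eq_sym (negbTE nh).
by rewrite kraus_gramE eqxx mxE.
Qed.

Lemma copy_inner_kraus0 h h' g g' h1 h2 (k1 : 'I_(pidim h1)) (k2 : 'I_(pidim h2)) :
  ~~ [&& g == phi h, g' == phi h', h1 == h & h2 == h'] ->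
  copy_inner (kraus h) (kraus h') g g' (vindex k1) (vindex k2) = 0.
Proof.
move=> nE; apply: big1 => l _; apply: big1 => l' _; rewrite !krausE.
by move: nE; do 4!case: (_ == _); rewrite //= ?conjC0 ?mul0r ?mulr0 ?mul0rn.
Qed.

Lemma copy_inner_kraus h h' (eg : pidim (phi h) = pidim (phi h'))
    (k1 : 'I_(pidim h)) (k2 : 'I_(pidim h')) :
  copy_inner (kraus h) (kraus h') (phi h) (phi h') (vindex k1) (vindex k2) =
  adjprod (U h) (U h') k1 k2.
Proof.
rewrite (copy_inner_cast _ _ eg) (adjprodE eg).
by apply: eq_bigr => l _; rewrite !kraus_vindex.
Qed.

Lemma sandwich_krausE h h' c X h1 h2 (k1 : 'I_(pidim h1)) (k2 : 'I_(pidim h2)) :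
  blockwise_scalar c X ->
  (adjm (kraus h) *m X *m kraus h') (vindex k1) (vindex k2) =
  if (h1 == h) && (h2 == h')
  then c (phi h) (phi h') *
       copy_inner (kraus h) (kraus h') (phi h) (phi h') (vindex k1) (vindex k2)
  else 0.
Proof.
move=> cX; rewrite (sandwich_blockwise _ _ _ _ cX).
rewrite (big_only1 (phi h)) // => [|g ng _]; last first.
  by apply: big1 => g' _; rewrite copy_inner_kraus0 ?(negbTE ng) ?mulr0.
rewrite (big_only1 (phi h')) // => [|g' ng' _]; last first.
  by rewrite copy_inner_kraus0 ?(negbTE ng') ?andbF ?mulr0.
case: ifP => // nE; rewrite copy_inner_kraus0 ?mulr0 //.
by rewrite !eqxx /= nE.
Qed.

Lemma sandwich_kraus_blockgraph h h' X :
  blockgraph eG X -> blockgraph eH (adjm (kraus h) *m X *m kraus h').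
Proof.
case/blockgraphP => c [c0 cX].
have [mu [mu0 muE]] : exists mu : C, (~~ simg eH h h' -> mu = 0) /\
    forall (k1 : 'I_(pidim h)) (k2 : 'I_(pidim h')),
      c (phi h) (phi h') *
        copy_inner (kraus h) (kraus h') (phi h) (phi h') (vindex k1) (vindex k2)
      = mu *+ (val k1 == val k2).
  have [sG|nsG] := boolP (simg eG (phi h) (phi h')); last first.
    by exists 0; split=> // k1 k2; rewrite c0 // mul0r mul0rn.
  have innerE := copy_inner_kraus (simg_pidim sG).
  have [sH|nsH] := boolP (simg eH h h').
    have [a aE] := U_scal sH sG.
    by exists (c (phi h) (phi h') * a); split=> [/negP|k1 k2]; rewrite // innerE aE mulrnAr.
  have [/negP//|U0] := U_orth nsH.
  by exists 0; split=> // k1 k2; rewrite innerE U0 mxE mulr0 mul0rn.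
apply/blockgraphP.
exists (fun h1 h2 => if (h1 == h) && (h2 == h') then mu else 0); split.
  move=> h1 h2 ns; case: (h1 =P h) (h2 =P h') => [e1|//] [e2|//].
  by subst; apply: mu0.
move=> h1 h2 k1 k2; rewrite (sandwich_krausE h h' _ _ cX).
by case: (h1 =P h) (h2 =P h') => [e1|_] [e2|_] //=; [subst; apply: muE | rewrite mul0rn..].
Qed.

Lemma kraus_cohom :
  cohom (blockgraph eH) (blockgraph eG)
    (fun i : 'I_#|{: vtx nH}| => kraus (enum_val i)).
Proof.
by split=> [|i j X]; [exact: kraus_complete | exact: sandwich_kraus_blockgraph].
Qed.

End KrausOfIsometries.

Lemma isometric_cohom_nc_le (C : numClosedFieldType) r (nG nH : 'I_r -> nat)
    (eG : forall d, rel 'I_(nG d)) (eH : forall d, rel 'I_(nH d))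
    (phi : vtx nH -> vtx nG) (U : forall h : vtx nH, 'M[C]_(pidim (phi h), pidim h)) :
  isometric_cohom eG eH phi U -> nc_le (blockgraph (C := C) eH) (blockgraph (C := C) eG).
Proof.
by case=> U_iso [U_orth U_scal]; eexists; eexists; exact: kraus_cohom U_orth U_scal.
Qed.

Section IsometriesOfCohom.
Variables (C : numClosedFieldType) (r : nat) (nG nH : 'I_r -> nat).
Variables (eG : forall d, rel 'I_(nG d)) (eH : forall d, rel 'I_(nH d)).
Variables (m : nat) (E : 'I_m -> 'M[C]_(total_size nG, total_size nH)).
Hypothesis E_complete : \sum_(i < m) adjm (E i) *m E i = 1%:M.
Hypothesis E_sandwich : forall i j (X : 'M[C]_(total_size nG)),
  blockgraph eG X -> blockgraph eH (adjm (E i) *m X *m E j).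

Definition vertex_pair_mx (g g' : vtx nG) : 'M[C]_(total_size nG) :=
  \matrix_(a, b) (((vertex_of a == g) && (vertex_of b == g'))%:R
                   *+ (val (copy_of a) == val (copy_of b))).

Lemma vertex_pair_mx_scalar g g' :
  blockwise_scalar (fun x y => ((x == g) && (y == g'))%:R) (vertex_pair_mx g g').
Proof. by move=> x y k k'; rewrite mxE !copy_of_vindex !vertex_of_vindex. Qed.

Lemma vertex_pair_mx_blockgraph g g' :
  simg eG g g' -> blockgraph eG (vertex_pair_mx g g').
Proof.
move=> sg; apply/blockgraphP; eexists; split; last exact: vertex_pair_mx_scalar.
move=> x y nxy; case: (x =P g) (y =P g') => [ex|//] [ey|//].
by subst; rewrite sg in nxy.
Qed.

Lemma sandwich_vertex_pair (A A' : 'M[C]_(total_size nG, total_size nH)) g g' a b :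
  (adjm A *m vertex_pair_mx g g' *m A') a b = copy_inner A A' g g' a b.
Proof.
rewrite (sandwich_blockwise _ _ _ _ (vertex_pair_mx_scalar g g')).
rewrite (big_only1 g) // => [|x nx _]; last by apply: big1 => y _; rewrite (negbTE nx) mul0r.
rewrite (big_only1 g') // => [|y ny _]; last by rewrite (negbTE ny) andbF mul0r.
by rewrite !eqxx mul1r.
Qed.

Definition kraus_block i g (h : vtx nH) : 'M[C]_(pidim g, pidim h) :=
  \matrix_(k, k') E i (vindex k) (vindex k').

Lemma kraus_block_neq0 h : exists ig : 'I_m * vtx nG, kraus_block ig.1 ig.2 h != 0.
Proof.
apply/existsP; apply: contraT => /existsPn blocks0.
pose a := @vindex _ _ h ord0.
have := congr1 (fun M : 'M[C]_(total_size nH) => M a a) E_complete.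
rewrite /= summxE mxE eqxx big1 => [/esym/eqP|i _]; first by rewrite pnatr_eq0.
rewrite mxE big_vindex; apply: big1 => g _; apply: big1 => k _.
have /negPn/eqP/matrixP/(_ k ord0) := blocks0 (i, g).
by rewrite !mxE => ->; rewrite mulr0.
Qed.

Lemma adjprod_kraus_block i j g g' h h' : simg eG g g' ->
  exists mu : C, (~~ simg eH h h' -> mu = 0) /\
    forall (k1 : 'I_(pidim h)) (k2 : 'I_(pidim h')),
      adjprod (kraus_block i g h) (kraus_block j g' h') k1 k2 = mu *+ (val k1 == val k2).
Proof.
move=> sG; have /blockgraphP [c [c0 cX]] := E_sandwich i j (vertex_pair_mx_blockgraph sG).
exists (c h h'); split=> [|k1 k2]; first exact: c0.
rewrite -cX sandwich_vertex_pair (copy_inner_cast _ _ (simg_pidim sG)).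
by rewrite (adjprodE (simg_pidim sG)); apply: eq_bigr => l _; rewrite !mxE.
Qed.

Lemma kraus_block_gram i g h : kraus_block i g h != 0 ->
  exists2 lam : C, 0 < lam &
    forall k1 k2 : 'I_(pidim h),
      adjprod (kraus_block i g h) (kraus_block i g h) k1 k2 = lam *+ (val k1 == val k2).
Proof.
move=> /matrix0Pn [l [k Alk]].
have [lam [_ lamE]] := adjprod_kraus_block i i h h (simg_refl eG g).
exists lam => //; have := lamE k k; rewrite eqxx mulr1n (adjprodE erefl) => <-.
rewrite (bigD1 l) //= cast_ord_id; apply: ltr_pwDl.
  by rewrite mulrC mul_conjC_gt0.
by apply: sumr_ge0 => l' _; rewrite cast_ord_id mulrC mul_conjC_ge0.
Qed.

Lemma exists_isometric_cohom :
  exists phi (U : forall h : vtx nH, 'M[C]_(pidim (phi h), pidim h)),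
    isometric_cohom eG eH phi U.
Proof.
have [ig igP] := fin_all_exists kraus_block_neq0.
pose phi h := (ig h).2.
pose A h : 'M_(pidim (phi h), pidim h) := kraus_block (ig h).1 (phi h) h.
have [lam lam_gt0 lamE] := fin_all_exists2 (fun h => kraus_block_gram (igP h)).
pose s h := (sqrtC (lam h))^-1.
exists phi, (fun h => s h *: A h); split; [|split].
- move=> h; apply/matrixP => k1 k2; rewrite -adjprod_id (adjprodZ erefl) lamE.
  by rewrite mulrnAr invsqrtC_normalize // mxE.
- move=> h h' nsH; have [sG|] := boolP (simg eG (phi h) (phi h')); [right | by left].
  have [mu [mu0 muE]] := adjprod_kraus_block (ig h).1 (ig h').1 h h' sG.
  apply/matrixP => k1 k2.
  by rewrite (adjprodZ (simg_pidim sG)) muE mu0 // mul0rn mulr0 mxE.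
- move=> h h' sH sG.
  have [mu [_ muE]] := adjprod_kraus_block (ig h).1 (ig h').1 h h' sG.
  by exists ((s h)^* * s h' * mu) => k1 k2; rewrite (adjprodZ (simg_pidim sG)) muE mulrnAr.
Qed.

End IsometriesOfCohom.

Theorem lemma3p5 (R : realType) (r : nat)
  (nG nH : 'I_r -> nat)
  (eG : forall d, rel 'I_(nG d)) (eH : forall d, rel 'I_(nH d))
  (symG : forall d, symmetric (eG d)) (irrG : forall d, irreflexive (eG d))
  (symH : forall d, symmetric (eH d)) (irrH : forall d, irreflexive (eH d)) :
  nc_le (blockgraph (C := R[i]) eH) (blockgraph (C := R[i]) eG) <->
  exists (phi : vtx nH -> vtx nG)
         (U : forall h : vtx nH, 'M[R[i]]_(pidim (phi h), pidim h)),
    (forall h, adjm (U h) *m U h = 1%:M) /\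
    (forall h h', ~~ simg eH h h' ->
        ~~ simg eG (phi h) (phi h') \/ adjprod (U h) (U h') = 0) /\
    (forall h h', simg eH h h' -> simg eG (phi h) (phi h') ->
        exists c : R[i], forall (i : 'I_(pidim h)) (j : 'I_(pidim h')),
          adjprod (U h) (U h') i j = c *+ (nat_of_ord i == nat_of_ord j)).
Proof.
split=> [[m [E [E_complete E_sandwich]]]|[phi [U U_cohom]]].
  exact: exists_isometric_cohom E_complete E_sandwich.
exact: isometric_cohom_nc_le U_cohom.
Qed.
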